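(* Let $g(x)\in A$. If $f(x)=x^2+ax-1$ for some $a\in\mathbb{F}$, then $M_g^T=M_g$. If $f(x)=x^m\pm1$, then $M_g^T=M_h$, where $h(x)=g(x^{-1})\in A$ (here $x$ is invertible in $A$), equivalently $h(x)=g^R(x)/x^{\deg g}$.
   Context: Let $\mathbb{F}$ be a finite field, $f(x)=x^m+\sum_{i=0}^{m-1}f_ix^i\in\mathbb{F}[x]$ monic of degree $m$, $A=\mathbb{F}[x]/\langle f(x)\rangle$, elements identified with polynomials of degree $<m$. $M_x$ is the $m\times m$ companion matrix of $f$: its $i$-th row is the unit vector $e_{i+1}$ for $1\le i\le m-1$ and its last row is $(-f_0,\ldots,-f_{m-1})$. For $g(x)=\sum_{i=0}^{m-1}a_ix^i\in A$, $M_g=\sum_{i=0}^{m-1}a_iM_x^i$. For $g\in\mathbb{F}[x]$, $g^R(x)=x^{\deg g}g(x^{-1})$ is its reciprocal polynomial. *)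

From HB Require Import structures.
From mathcomp Require Import all_boot all_algebra.
Set Implicit Arguments. Unset Strict Implicit. Unset Printing Implicit Defensive.
Import GRing.Theory.
Local Open Scope ring_scope.

(* Companion matrix M_x of f (f monic of degree m): for 0-based row i < m-1
   the row is the unit vector e_{i+1}; the last row is (-f_0, ..., -f_{m-1}). *)
Definition compmx (F : nzRingType) (m : nat) (f : {poly F}) : 'M[F]_m :=
  \matrix_(i < m, j < m)
    if (i.+1 < m)%N then ((j : nat) == i.+1)%:R else - f`_j.

Definition Mg (F : nzRingType) (m : nat) (f g : {poly F}) : 'M[F]_m :=
  \sum_(i < m) g`_i *: (compmx m f) ^+ i.

(* Reciprocal polynomial g^R(x) = x^{deg g} g(1/x) (with 0^R = 0). *)
Definition recip (F : nzRingType) (g : {poly F}) : {poly F} :=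
  \poly_(i < size g) g`_((size g).-1 - i).

From HB Require Import structures.
From mathcomp Require Import all_boot all_algebra.
Set Implicit Arguments.
Unset Strict Implicit.
Unset Printing Implicit Defensive.
Import GRing.Theory.
Local Open Scope ring_scope.

(* Since size g <= m, M_g is the evaluation g(M_x), and transposition commutes
   with evaluation, so M_g^T = g(M_x^T).  For f = x^2 + a x - 1 the companion
   matrix is symmetric.  For f = x^m + c with c^2 = 1 it is a signed cyclic
   permutation matrix, hence orthogonal: M_x^T = M_x^-1 = u(M_x) where u
   represents x^-1 in A.  Thus M_g^T = (g \Po u)(M_x), which by Cayley-Hamilton
   only depends on g \Po u modulo f.  Finally x^(d-i) u^d = (x u)^(d-i) u^i is
   congruent to u^i, which identifies g \Po u with g^R u^d modulo f. *)

Section HornerMx.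
Variables (R : comNzRingType) (n : nat).
Implicit Types (A : 'M[R]_n.+1) (p q : {poly R}).

Lemma horner_mx_sum A p k : (size p <= k)%N ->
  horner_mx A p = \sum_(i < k) p`_i *: A ^+ i.
Proof.
move=> le_pk; rewrite -[p in LHS](take_poly_id le_pk) /take_poly poly_def.
by rewrite linear_sum; apply: eq_bigr => i _; rewrite linearZ rmorphXn /= horner_mx_X.
Qed.

Lemma trmx_horner_mx A p : (horner_mx A p)^T = horner_mx A^T p.
Proof.
elim/poly_ind: p => [|p c IHp]; first by rewrite !rmorph0 trmx0.
rewrite !rmorphD !rmorphM /= !horner_mx_X !horner_mx_C linearD /= tr_scalar_mx.
rewrite -mulmxE trmx_mul IHp mulmxE; congr (_ + _).
by have := comm_horner_mx2 A^T 'X p; rewrite horner_mx_X.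
Qed.

Lemma horner_mx_comp A p q : horner_mx A (p \Po q) = horner_mx (horner_mx A q) p.
Proof.
elim/poly_ind: p => [|p c IHp]; first by rewrite comp_poly0 !rmorph0.
rewrite comp_poly_MXaddC !rmorphD !rmorphM /= IHp.
by rewrite !horner_mx_X !horner_mx_C.
Qed.

Lemma horner_mx_inv A B u : A *m B = 1%:M -> horner_mx A ('X * u) = 1%:M ->
  B = horner_mx A u.
Proof.
move=> AB1 Xu1; have uA1 : horner_mx A u *m A = 1%:M.
  by rewrite -Xu1 mulrC rmorphM /= horner_mx_X.
by rewrite -[B]mul1mx -uA1 -mulmxA AB1 mulmx1.
Qed.

End HornerMx.

Section PolyModulo.
Variable F : fieldType.
Implicit Types (f g p q u v w : {poly F}).

Lemma horner_mx_modp n (A : 'M[F]_n.+1) p q : horner_mx A q = 0 ->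
  horner_mx A (p %% q) = horner_mx A p.
Proof.
by move=> Aq0; rewrite [in RHS](divp_eq p q) rmorphD rmorphM /= Aq0 mulr0 add0r.
Qed.

Lemma modp_mul_exp_eq1 f w v k : w %% f = 1 -> (w ^+ k * v) %% f = v %% f.
Proof.
move=> w1; elim: k v => [|k IHk] v; first by rewrite expr0 mul1r.
by rewrite exprS -mulrA mulrC -modp_mul w1 mulr1 IHk.
Qed.

Lemma modp_comp_recip f g u : ('X * u) %% f = 1 ->
  (g \Po u) %% f = (recip g * u ^+ (size g).-1) %% f.
Proof.
move=> Xu1; rewrite /recip poly_def mulr_suml comp_polyE.
rewrite !(big_morph _ (@modpD F f) (@mod0p F f)) (reindex_inj rev_ord_inj) /=.
apply: eq_bigr => -[i lt_i_g] _ /=; rewrite -scalerAl !modpZl subnS predn_sub.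
have le_i_d : (i <= (size g).-1)%N by rewrite -ltnS prednK // (leq_ltn_trans _ lt_i_g).
congr (_ *: _); rewrite -[in RHS](subnKC le_i_d).
by rewrite exprD mulrA -exprMn modp_mul_exp_eq1.
Qed.

Lemma modp_XnaddC_mulX n (c : F) : c * c = 1 ->
  ('X * (- c *: 'X^n)) %% ('X^(n.+1) + c%:P) = 1.
Proof.
move=> cc1; have -> : 'X * (- c *: 'X^n) = (- c)%:P * ('X^(n.+1) + c%:P) + 1.
  by rewrite -mul_polyC mulrCA -exprS mulrDr -polyCM mulNr cc1 (polyCN 1) polyC1 addrNK.
by rewrite modp_addl_mul_small // size_poly1 size_XnaddC.
Qed.

End PolyModulo.

Lemma char_poly_castmx (R : comNzRingType) d k (e : d = k) (A : 'M[R]_d) :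
  char_poly (castmx (e, e) A) = char_poly A.
Proof. by case: k / e; rewrite castmx_id. Qed.

Section CompanionMatrix.
Variable R : comNzRingType.
Implicit Types (f g : {poly R}).

Lemma compmx_castmx f n (e : (size f).-1 = n.+1) :
  compmx n.+1 f = castmx (e, e) (companionmx f).
Proof.
apply/matrixP => i j; rewrite castmxE !mxE /= e /=.
have [-> | ne_i_n] := eqVneq (i : nat) n; first by rewrite ltnn.
by rewrite ltnS ltn_neqAle ne_i_n -ltnS ltn_ord eq_sym.
Qed.

Lemma horner_mx_compmx f n : f \is monic -> size f = n.+2 ->
  horner_mx (compmx n.+1 f) f = 0.
Proof.
move=> monic_f size_f; have e : (size f).-1 = n.+1 by rewrite size_f.
rewrite (compmx_castmx e).
by have := Cayley_Hamilton (castmx (e, e) (companionmx f)); rewrite char_poly_castmx companionmxK.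
Qed.

Lemma Mg_horner_mx n f g : (size g <= n.+1)%N ->
  Mg n.+1 f g = horner_mx (compmx n.+1 f) g.
Proof. by move=> le_g_n; rewrite /Mg -horner_mx_sum. Qed.

Lemma size_X2addZXsub1 (a : R) : size ('X^2 + a *: 'X - 1 : {poly R}) = 3.
Proof.
rewrite -addrA size_polyDl ?size_polyXn // (leq_ltn_trans (size_polyD _ _)) //.
by rewrite size_polyN size_poly1 gtn_max /= (leq_ltn_trans (size_scale_leq _ _)) ?size_polyX.
Qed.

Lemma trmx_compmx_X2addZXsub1 (a : R) :
  (compmx 2 ('X^2 + a *: 'X - 1))^T = compmx 2 ('X^2 + a *: 'X - 1).
Proof.
apply/matrixP => -[[|[|?]] ?] [[|[|?]] ?] //; rewrite !mxE //=.
all: by rewrite !coefB !coefD !coefXn coefZ coefX coefC mulr0 add0r sub0r opprK.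
Qed.

Lemma compmx_XnaddCE n (c : R) (i j : 'I_n.+1) :
  compmx n.+1 ('X^(n.+1) + c%:P) i j =
  (if (i.+1 < n.+1)%N then 1 else - c) * (j == ordS i)%:R.
Proof.
rewrite mxE -val_eqE /=; case: ifP => [lt_i1_n|/negbT]; first by rewrite mul1r modn_small.
rewrite -leqNgt ltnS => le_n_i; have -> : (i : nat) = n by apply/anti_leq; rewrite le_n_i andbT -ltnS.
rewrite modnn coefD coefXn coefC ltn_eqF // add0r.
by case: eqP; rewrite ?mulr1 ?mulr0 ?oppr0.
Qed.

Lemma compmx_XnaddC_mulmx_tr n (c : R) : c * c = 1 ->
  compmx n.+1 ('X^(n.+1) + c%:P) *m (compmx n.+1 ('X^(n.+1) + c%:P))^T = 1%:M.
Proof.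
move=> cc1; apply/matrixP => i j.
have trE (A : 'M[R]_n.+1) k l : A^T k l = A l k by rewrite mxE.
rewrite [LHS]mxE [RHS]mxE (bigD1 (ordS i)) //= big1 => [|k ne_k_i]; last first.
  by rewrite trE !compmx_XnaddCE (negPf ne_k_i) mulr0 mul0r.
rewrite addr0 trE !compmx_XnaddCE eqxx mulr1 (inj_eq (@ordS_inj _)).
case: eqP => [->|_]; last by rewrite !mulr0.
by rewrite mulr1; case: ifP; rewrite ?mulr1 ?mulrNN.
Qed.

End CompanionMatrix.

Theorem mainTheorem14 (F : finFieldType) (m : nat) (f g : {poly F}) :
  f \is monic -> size f = m.+1 -> (size g <= m)%N ->
  (forall a : F, f = 'X^2 + a *: 'X - 1 -> (Mg m f g)^T = Mg m f g) /\
  (forall c : F, (c = 1 \/ c = -1) -> f = 'X^m + c%:P ->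
     (exists u : {poly F}, ('X * u) %% f = 1) /\
     (forall u : {poly F}, ('X * u) %% f = 1 ->
        (Mg m f g)^T = Mg m f ((g \Po u) %% f) /\
        (g \Po u) %% f = (recip g * u ^+ (size g).-1) %% f)).
Proof.
move=> monic_f size_f size_g; split=> [a def_f | c c_sign def_f].
  have m2 : m = 2 by apply: succn_inj; rewrite -size_f def_f size_X2addZXsub1.
  subst m; rewrite Mg_horner_mx // trmx_horner_mx def_f.
  by rewrite trmx_compmx_X2addZXsub1.
have cc1 : c * c = 1 by case: c_sign => ->; rewrite ?mulrNN mulr1.
case: m => [|n] in size_f size_g def_f *.
  move: monic_f; rewrite def_f expr0 -polyCD monicE lead_coefC => /eqP c1.
  have c0 : c = 0 by apply: (addrI 1); rewrite c1 addr0.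
  by move: cc1; rewrite c0 mulr0 => /esym/eqP; rewrite oner_eq0.
split=> [|u Xu1]; first by exists (- c *: 'X^n); rewrite def_f modp_XnaddC_mulX.
split; last exact: modp_comp_recip.
have Mf0 := horner_mx_compmx monic_f size_f.
rewrite !Mg_horner_mx //; last by rewrite -ltnS -size_f ltn_modp -size_poly_gt0 size_f.
rewrite trmx_horner_mx horner_mx_modp // horner_mx_comp; congr horner_mx.
apply: horner_mx_inv; first by rewrite def_f compmx_XnaddC_mulmx_tr.
by rewrite -(horner_mx_modp _ Mf0) Xu1 rmorph1.
Qed.
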